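(* Let $q$ be a prime and let $f:\mathbb{N}\to\{0,1\}$ be a multiplicative $q$-automatic sequence such that $\widehat{\mathbb{P}_1}$ is infinite. Then there exists $\alpha\in\mathbb{N}$ such that the set $\{p\in\widehat{\mathbb{P}_1} : \alpha_p=\alpha\}$ is infinite.
   Context: $f$ multiplicative means $f(mn)=f(m)f(n)$ whenever $\gcd(m,n)=1$; $f$ is $q$-automatic if its $q$-kernel $\{\{f(q^in+r)\}_{n\ge 0}: i\ge 1, 0\le r\le q^i-1\}$ is finite. $\widehat{\mathbb{P}_1}=\{p \text{ prime} : f(p^e)=1 \text{ for some } e\ge 1\}$. $\phi$ is Euler's totient function. For a prime $p$ and integer $\delta\ge 1$, $\alpha_{p,\delta}$ is defined by $q^{\alpha_{p,\delta}}\,\|\, p^{\delta\phi(q)}-1$ (i.e. $q^{\alpha_{p,\delta}}$ divides $p^{\delta\phi(q)}-1$ but $q^{\alpha_{p,\delta}+1}$ does not). For $p\in\widehat{\mathbb{P}_1}$, $\alpha_p=\min\{\alpha_{p,\delta} : \delta\ge 1,\ f(p^\delta)=1\}$. *)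

From mathcomp Require Import all_boot.
Set Implicit Arguments. Unset Strict Implicit. Unset Printing Implicit Defensive.

Definition zero_one (f : nat -> nat) : Prop := forall n, f n <= 1.

Definition multiplicative (f : nat -> nat) : Prop :=
  forall m n, 0 < m -> 0 < n -> coprime m n -> f (m * n) = f m * f n.

(* The q-kernel {(f(q^i n + r))_{n>=0} : i >= 1, 0 <= r <= q^i - 1} is finite:
   it is contained in a finite family F 0, ..., F (k-1) of sequences. *)
Definition q_automatic (q : nat) (f : nat -> nat) : Prop :=
  exists (k : nat) (F : nat -> nat -> nat),
    forall i r, 1 <= i -> r < q ^ i ->
      exists j, j < k /\ forall n, f (q ^ i * n + r) = F j n.

Definition P1hat (f : nat -> nat) (p : nat) : Prop :=
  prime p /\ exists e, 1 <= e /\ f (p ^ e) = 1.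

Definition infinite_set (P : nat -> Prop) : Prop :=
  forall N, exists p, N < p /\ P p.

Definition alpha_pd (q p delta : nat) : nat :=
  logn q (p ^ (delta * totient q) - 1).

Definition alpha_p_is (f : nat -> nat) (q p a : nat) : Prop :=
  (exists delta, 1 <= delta /\ f (p ^ delta) = 1 /\ alpha_pd q p delta = a) /\
  (forall delta, 1 <= delta -> f (p ^ delta) = 1 -> a <= alpha_pd q p delta).

From mathcomp Require Import all_boot.
From mathcomp Require Import zify ring.
From Stdlib Require Import Classical ClassicalEpsilon.

(* By finiteness of the q-kernel, two of the subsequences
   n |-> f (q^i n + 1), i >= 1, coincide: f (q^I n + 1) = f (q^I' n + 1) with
   0 < I < I'. *)

Lemma pigeonhole_nat {n} (g : nat -> nat) :
  (forall i, i <= n -> g i < n) -> exists i j, i < j <= n /\ g i = g j.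
Proof.
move=> g_lt; pose h (i : 'I_n.+1) : 'I_n := Ordinal (g_lt i (ltn_ord i)).
have : ~~ injectiveb h.
  by apply/negP => /injectiveP/leq_card; rewrite !card_ord ltnn.
case/injectivePn => x [y x_neq_y /(congr1 val) /= gxy].
have le_n (z : 'I_n.+1) : z <= n by rewrite -ltnS.
case: (ltngtP x y) => [lt_xy|lt_yx|eq_xy].
- by exists x, y; rewrite lt_xy le_n.
- by exists y, x; rewrite lt_yx le_n.
- by case/negP: x_neq_y; apply/eqP/val_inj.
Qed.

Lemma classical_least (P : nat -> Prop) n :
  P n -> exists m, P m /\ forall k, P k -> m <= k.
Proof.
elim/ltn_ind: n => n IH Pn.
have [[k [lt_kn Pk]]|no_smaller] := classic (exists k, k < n /\ P k).
  exact: IH lt_kn Pk.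
exists n; split=> // k Pk; rewrite leqNgt; apply/negP => lt_kn.
by apply: no_smaller; exists k.
Qed.

Lemma infinite_bounded_label (R : nat -> nat -> Prop) K :
  infinite_set (fun p => exists2 a, a <= K & R p a) ->
  exists a, infinite_set (fun p => R p a).
Proof.
elim: K => [|K IH] infR.
  exists 0 => N; have [p [lt_Np [a a_le0 Rpa]]] := infR N.
  by exists p; move: a_le0; rewrite leqn0 => /eqP a0; rewrite -a0.
have [infK|finK] := classic (infinite_set (fun p => R p K.+1)); first by exists K.+1.
have [N0 noK] : exists N0, ~ exists p, N0 < p /\ R p K.+1.
  by apply: NNPP => C; apply: finK => N; apply: NNPP => C'; apply: C; exists N.
apply: IH => N; have [p [lt_Np [a a_le Rpa]]] := infR (maxn N N0).
rewrite gtn_max in lt_Np; case/andP: lt_Np => lt_Np lt_N0p.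
exists p; split=> //; exists a => //; rewrite leq_eqVlt in a_le.
case/orP: a_le => [/eqP aK|] //; case: noK; exists p; by rewrite -aK.
Qed.

Lemma enumerate_infinite {P : nat -> Prop} N :
  infinite_set P -> exists s : nat -> nat,
    [/\ N < s 0, forall t, s t < s t.+1 & forall t, P (s t)].
Proof.
move=> infP; have [next next_spec] := choice _ infP.
pose s t := iter t.+1 next N.
exists s; split=> [|t|t]; first by case: (next_spec N).
  by case: (next_spec (s t)).
by case: (next_spec (iter t next N)).
Qed.

Lemma one_plus_pow_mod_sq m y : (1 + y) ^ m = 1 + m * y %[mod y ^ 2].
Proof.
elim: m => [|m IH]; first by rewrite mul0n.
rewrite expnS -modnMmr IH modnMmr.
have -> : (1 + y) * (1 + m * y) = m * y ^ 2 + (1 + m.+1 * y) by ring.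
by rewrite modnMDl.
Qed.

Lemma coprime_prod (I : Type) (r : seq I) (P : pred I) (F : I -> nat) m :
  (forall i, P i -> coprime (F i) m) -> coprime (\prod_(i <- r | P i) F i) m.
Proof.
move=> coF; apply: (big_ind (fun x => coprime x m)) => // [|x y cx cy].
- exact: coprime1n.
- by rewrite coprimeMl cx.
Qed.

Lemma pow_congr_one_from_prime_parts m s X : 0 < X ->
  (forall l, prime l -> l %| X -> l ^ (logn l X * s) = 1 %[mod m]) ->
  X ^ s = 1 %[mod m].
Proof.
move=> X_gt0 parts; rewrite {1}(prod_prime_decomp X_gt0) prime_decompE big_map.
rewrite big_seq; apply: (big_ind (fun x => x ^ s = 1 %[mod m])) => [|x y ex ey|l].
- by rewrite exp1n.
- by rewrite expnMn -modnMm ex ey modnMm.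
- by rewrite mem_primes => /and3P [l_pr _ l_dvd]; rewrite -expnM parts.
Qed.

(* For c > 0 and q not dividing u, (q^c u + 1)^phi(q) = 1 + phi(q) q^c u is
   not 1 modulo q^(c+1). *)
Lemma one_plus_qpow_totient {q c u} : prime q -> 0 < c -> coprime q u ->
  (q ^ c * u + 1) ^ totient q != 1 %[mod q ^ c.+1].
Proof.
move=> q_pr c_gt0 co_qu; set y := q ^ c * u.
have sq_dvd : q ^ c.+1 %| y ^ 2.
  rewrite /y expnMn -expnM; apply: dvdn_mulr; apply: dvdn_exp2l; lia.
have binom : (y + 1) ^ totient q = 1 + totient q * y %[mod q ^ c.+1].
  by rewrite addnC -(modn_dvdm _ sq_dvd) one_plus_pow_mod_sq (modn_dvdm _ sq_dvd).
rewrite binom -{2}(addn0 1) eqn_modDl eqn_mod_dvd // subn0.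
rewrite /y mulnCA expnSr dvdn_pmul2l ?expn_gt0 ?prime_gt0 // Euclid_dvdM //.
rewrite totient_prime // negb_or -[~~ (q %| u)]prime_coprime // co_qu andbT.
have q_gt1 := prime_gt1 q_pr.
by rewrite gtnNdvd //; lia.
Qed.

Section Multiplicative.
Variable f : nat -> nat.
Hypothesis f_mul : multiplicative f.

Lemma multiplicative_one {n} : 0 < n -> f n = 1 -> f 1 = 1.
Proof.
move=> n_gt0 fn1; have := @f_mul n 1 n_gt0 (ltn0Sn 0) (coprimen1 n).
by rewrite muln1 fn1 => /esym/eqP; rewrite muln_eq1 => /andP [_ /eqP].
Qed.

(* If f Y = 1 then f = 1 on every prime-power part of Y, since f (l^e) f Z = 1
   for the coprime factorization Y = l^e Z. *)
Lemma multiplicative_prime_part Y l : 0 < Y -> f Y = 1 -> prime l ->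
  f (l ^ logn l Y) = 1.
Proof.
move=> Y_gt0 fY l_pr; have [Z co_lZ defY] := pfactor_coprime l_pr Y_gt0.
have Z_gt0 : 0 < Z by move: Y_gt0; rewrite defY muln_gt0 => /andP [].
have co : coprime Z (l ^ logn l Y) by rewrite coprime_sym coprimeXl.
move: fY; rewrite {1}defY f_mul // ?expn_gt0 ?prime_gt0 //.
by move/eqP; rewrite muln_eq1 => /andP [_ /eqP].
Qed.

Lemma multiplicative_prod_prime_powers (P D : nat -> nat) a b :
  f 1 = 1 -> (forall t, prime (P t)) -> (forall s t, s < t -> P s < P t) ->
  (forall t, f (P t ^ D t) = 1) -> f (\prod_(a <= t < b) P t ^ D t) = 1.
Proof.
move=> f1 P_pr P_mono fPD; elim: b => [|b IH]; first by rewrite big_geq.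
have [lt_ba|le_ab] := ltnP b a; first by rewrite big_geq.
have PD_gt0 t : 0 < P t ^ D t by rewrite expn_gt0 prime_gt0.
rewrite big_nat_recr //= f_mul ?IH ?fPD ?prodn_gt0 //.
rewrite big_nat_cond; apply: coprime_prod => t /andP [/andP [_ lt_tb] _].
apply: coprimeXl; apply: coprimeXr.
by rewrite prime_coprime // dvdn_prime2 // ltn_eqF // P_mono.
Qed.

(* If P1hat f is infinite, f takes the value 1 at some X > 1 with X = 1 mod Q:
   among the partial products of prime powers p^d (p > Q, f (p^d) = 1) two
   agree modulo Q, and their quotient is such an X. *)
Lemma value_one_congruent_one {Q} : 0 < Q -> infinite_set (P1hat f) ->
  exists X, [/\ 1 < X, f X = 1 & Q %| X - 1].
Proof.
move=> Q_gt0 infP1; have [P [Q_lt_P0 P_step P1]] := enumerate_infinite Q infP1.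
have P_pr t : prime (P t) by case: (P1 t).
have P_mono s t : s < t -> P s < P t.
  move/subnKC <-; elim: (t - s.+1) => [|d IH]; first by rewrite addn0.
  by rewrite addnS (ltn_trans IH).
have [D D_spec] : exists D, forall t, 0 < D t /\ f (P t ^ D t) = 1.
  apply: (choice (fun t d => 0 < d /\ f (P t ^ d) = 1)) => t.
  by case: (P1 t) => _ [e he]; exists e.
have PD_gt1 t : 1 < P t ^ D t.
  by rewrite -(expn0 (P t)) ltn_exp2l ?prime_gt1 ?(D_spec t).1.
have Q_lt_P t : Q < P t by case: t => // t; rewrite (ltn_trans Q_lt_P0) ?P_mono.
have coPD_Q t : coprime (P t ^ D t) Q.
  rewrite coprimeXl // prime_coprime //; apply/negP => /(dvdn_leq Q_gt0).
  by rewrite leqNgt Q_lt_P.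
pose pp j := \prod_(0 <= t < j) P t ^ D t.
have [j1 [j2 [/andP [lt_j12 _] pp_eq]]] :=
  pigeonhole_nat (fun j => pp j %% Q) (fun j _ => ltn_pmod (pp j) Q_gt0).
pose X := \prod_(j1 <= t < j2) P t ^ D t.
have pp_split : pp j2 = pp j1 * X by rewrite /pp /X -big_cat_nat // ltnW.
have f1 : f 1 = 1 by apply: (multiplicative_one (ltnW (PD_gt1 0))); case: (D_spec 0).
exists X; split.
- rewrite /X big_ltn // (leq_trans (PD_gt1 j1)) // leq_pmulr // prodn_gt0 // => t.
  exact: ltnW (PD_gt1 t).
- by apply: multiplicative_prod_prime_powers => // t; case: (D_spec t).
- have co_Q_pp : coprime Q (pp j1) by rewrite coprime_sym /pp coprime_prod.
  rewrite -(Gauss_dvdr _ co_Q_pp) mulnBr muln1 -pp_split -eqn_mod_dvd ?pp_eq //.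
  by rewrite pp_split leq_pmulr // prodn_gt0 // => t; exact: ltnW (PD_gt1 t).
Qed.

Lemma prime_factor_small_alpha {q c u} : prime q -> 0 < c -> coprime q u ->
  f (q ^ c * u + 1) = 1 ->
  exists l, [/\ prime l, l %| q ^ c * u + 1 &
    exists2 e, 0 < e & f (l ^ e) = 1 /\ alpha_pd q l e <= c].
Proof.
move=> q_pr c_gt0 co_qu fY; set Y := q ^ c * u + 1.
have Y_gt0 : 0 < Y by rewrite /Y addn1.
have [l [l_pr l_dvd l_bad]] : exists l, [/\ prime l, l %| Y &
    l ^ (logn l Y * totient q) != 1 %[mod q ^ c.+1]].
  apply: NNPP => no_bad; case/negP: (one_plus_qpow_totient q_pr c_gt0 co_qu).
  apply/eqP/pow_congr_one_from_prime_parts => // l l_pr l_dvd.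
  by apply/eqP/negPn/negP => bad; apply: no_bad; exists l.
exists l; split=> //; exists (logn l Y).
  by rewrite logn_gt0 mem_primes l_pr Y_gt0.
split; first exact: multiplicative_prime_part.
rewrite /alpha_pd leqNgt; apply: contra l_bad => alpha_big.
have [V0|V_gt0] := posnP (l ^ (logn l Y * totient q) - 1).
  by rewrite V0 logn0 in alpha_big.
by rewrite eqn_mod_dvd ?expn_gt0 ?prime_gt0 // pfactor_dvdn.
Qed.

End Multiplicative.

Lemma alpha_p_exists {f} q {p e} : 0 < e -> f (p ^ e) = 1 ->
  exists2 a, alpha_p_is f q p a & a <= alpha_pd q p e.
Proof.
move=> e_gt0 fe.
have [a [[d [d_gt0 [fd alpha_d]]] a_min]] :=
  @classical_least (fun a => exists d, 0 < d /\ f (p ^ d) = 1 /\ alpha_pd q p d = a)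
    (alpha_pd q p e) (ex_intro _ e (conj e_gt0 (conj fe erefl))).
exists a; last by apply: a_min; exists e.
split; first by exists d.
by move=> d' d'_gt0 fd'; apply: a_min; exists d'.
Qed.

Lemma kernel_repetition {q f} : 1 < q -> q_automatic q f ->
  exists I I', [/\ 0 < I, I < I' & forall n, f (q ^ I * n + 1) = f (q ^ I' * n + 1)].
Proof.
move=> q_gt1 [k [F kerF]].
have [idx idx_spec] : exists idx : nat -> nat, forall t,
    idx t < k /\ forall n, f (q ^ t.+1 * n + 1) = F (idx t) n.
  apply: (choice (fun t j => j < k /\ forall n, f (q ^ t.+1 * n + 1) = F j n)) => t.
  by apply: kerF; rewrite // -{1}(expn0 q) ltn_exp2l.
have [t1 [t2 [/andP [lt_t12 _] idx_eq]]] := pigeonhole_nat idx (fun t _ => (idx_spec t).1).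
by exists t1.+1, t2.+1; split=> // n; rewrite (idx_spec t1).2 (idx_spec t2).2 idx_eq.
Qed.

Lemma exponent_reduction (g : nat -> nat) q I I' : I < I' ->
  (forall n, g (q ^ I * n + 1) = g (q ^ I' * n + 1)) ->
  forall c n, I <= c -> g (q ^ c * n + 1) = g (q ^ (I + (c - I) %% (I' - I)) * n + 1).
Proof.
move=> lt_II' period c; elim/ltn_ind: c => c IH n le_Ic.
have [lt_cI'|le_I'c] := ltnP c I'.
  by rewrite modn_small ?subnKC //; lia.
have def_c : c = I' + (c - I') by rewrite subnKC.
rewrite {1}def_c expnD -mulnA -period mulnA -expnD IH; [|lia|lia].
have -> : c - I = (c - I') + (I' - I) by lia.
by rewrite addKn modnDr.
Qed.

(* q^c u + 1 (c > 0) is coprime to u and q, so when N! divides u q^a, every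
   prime factor of q^c u + 1 exceeds N. *)
Lemma prime_factors_exceed {q c u} a {N l} : 0 < c -> N`! %| u * q ^ a ->
  prime l -> l %| q ^ c * u + 1 -> N < l.
Proof.
move=> c_gt0 fact_dvd l_pr l_dvd.
have co_Yqu : coprime (q ^ c * u + 1) (q ^ c * u) by rewrite addn1 coprimeSn.
have co_Y : coprime (q ^ c * u + 1) (u * q ^ a).
  rewrite coprimeMr (coprime_dvdr _ co_Yqu) ?dvdn_mull //=.
  by rewrite coprimeXr // (coprime_dvdr _ co_Yqu) // dvdn_mulr // dvdn_exp.
rewrite ltnNge; apply/negP => le_lN.
have : l %| 1.
  by rewrite -(eqP co_Y) dvdn_gcd l_dvd (dvdn_trans _ fact_dvd) // dvdn_fact ?prime_gt0.
by rewrite dvdn1 => /eqP l1; rewrite l1 in l_pr.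
Qed.

(* Core of the argument: above every bound N there is a prime l in P1hat with
   alpha_l < I'.  It is found in Y = q^c u + 1, obtained by reducing the
   exponent of q in X - 1 for an X with f X = 1 and X = 1 mod q^I' N!. *)
Lemma large_primes_small_alpha {q f I I'} : prime q -> multiplicative f ->
  infinite_set (P1hat f) -> 0 < I -> I < I' ->
  (forall n, f (q ^ I * n + 1) = f (q ^ I' * n + 1)) ->
  infinite_set (fun p => exists2 a, a <= I' & P1hat f p /\ alpha_p_is f q p a).
Proof.
move=> q_pr f_mul infP1 I_gt0 lt_II' period N.
have Q_gt0 : 0 < q ^ I' * N`! by rewrite muln_gt0 expn_gt0 prime_gt0 ?fact_gt0.
have [X [X_gt1 fX Q_dvd]] := value_one_congruent_one _ f_mul Q_gt0 infP1.
have X1_gt0 : 0 < X - 1 by rewrite subn_gt0.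
have [u co_qu defX] := pfactor_coprime q_pr X1_gt0.
set a := logn q (X - 1) in defX.
have le_I'a : I' <= a by rewrite -pfactor_dvdn ?(dvdn_trans _ Q_dvd) ?dvdn_mulr.
set c := I + (a - I) %% (I' - I).
have c_gt0 : 0 < c by rewrite addn_gt0 I_gt0.
have lt_cI' : c < I' by rewrite /c -ltn_subRL ltn_mod subn_gt0.
have fY : f (q ^ c * u + 1) = 1.
  by rewrite -exponent_reduction ?(leq_trans (ltnW lt_II')) // mulnC -defX subnK // ltnW.
have [l [l_pr l_dvd [e e_gt0 [fe alpha_e]]]] :=
  prime_factor_small_alpha _ f_mul q_pr c_gt0 co_qu fY.
have lt_Nl : N < l.
  apply: (prime_factors_exceed a c_gt0 _ l_pr l_dvd).
  by rewrite -defX (dvdn_trans _ Q_dvd) ?dvdn_mull.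
have [b alpha_l le_b] := alpha_p_exists q e_gt0 fe.
exists l; split=> //; exists b; last by split=> //; split=> //; exists e.
by rewrite ltnW // (leq_ltn_trans le_b) // (leq_ltn_trans alpha_e).
Qed.

Theorem proposition2 (q : nat) (f : nat -> nat) :
  prime q -> zero_one f -> multiplicative f -> q_automatic q f ->
  infinite_set (P1hat f) ->
  exists alpha : nat, infinite_set (fun p => P1hat f p /\ alpha_p_is f q p alpha).
Proof.
move=> q_pr _ f_mul f_aut infP1.
have [I [I' [I_gt0 lt_II' period]]] := kernel_repetition (prime_gt1 q_pr) f_aut.
apply: (infinite_bounded_label _ I').
exact: (large_primes_small_alpha q_pr f_mul infP1 I_gt0 lt_II' period).
Qed.
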